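(* Let $n\ge2$ and for $r\in(0,\pi)$ let $h_r$ be the solution on $[0,r)$ of $$h_r''(u)(h_r'(u))^{n-1}=e^{h_r(u)}(\sin u)^{n-1},\qquad \lim_{u\to r}h_r(u)=\infty,$$ real-analytic in $u^2$. Then $h_r(0)\ge -\pi\, n^{1/n}\pi^{1/n}$ for all $r\in(0,\pi)$; consequently $\inf_{[0,r)}h_r\ge -\pi\,n^{1/n}\pi^{1/n}$.
   Context: This is the ODE for the Kähler potential (as a function of $u=\sqrt\rho$, $\rho(x,v)=4|v|^2$) of the complete Kähler–Einstein metric of Ricci curvature $-1$ on the Grauert tube $T^rH^n$ over real hyperbolic space $H^n$, whose maximal radius is $\pi$. *)

From Stdlib Require Import Reals Lra.
Open Scope R_scope.

Definition real_analytic_at (g : R -> R) (t0 : R) : Prop :=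
  exists (a : nat -> R) (delta : R), 0 < delta /\
    forall t, Rabs (t - t0) < delta ->
      infinite_sum (fun k => a k * (t - t0) ^ k) (g t).

Definition analytic_in_u2 (h : R -> R) (r : R) : Prop :=
  exists g : R -> R,
    (forall t, 0 <= t < r ^ 2 -> real_analytic_at g t) /\
    (forall u, - r < u < r -> h u = g (u ^ 2)).

Definition tends_to_infty_left (h : R -> R) (r : R) : Prop :=
  forall M : R, exists delta : R, 0 < delta /\
    forall u, r - delta < u < r -> M < h u.

Definition solves_ode (n : nat) (r : R) (h : R -> R) : Prop :=
  exists h1 h2 : R -> R,
    (forall u, - r < u < r -> derivable_pt_lim h u (h1 u)) /\
    (forall u, - r < u < r -> derivable_pt_lim h1 u (h2 u)) /\
    (forall u, 0 <= u < r ->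
       h2 u * (h1 u) ^ (n - 1) = exp (h u) * (sin u) ^ (n - 1)).

(** Writing [w := (h')^n], the ODE says [w' = n e^h (sin u)^(n-1)] on [0, r).
    Evenness gives [h'(0) = 0], and since [w' >= 0] the function [w] is
    nondecreasing and nonnegative; were [h'] negative somewhere, it would stay
    negative up to [r] and [h] could not blow up, so [h] is nondecreasing.  If
    [h(0) < -π (nπ)^(1/n)], take [t] with [h(t) = 0]; then [h <= 0] on
    [[0, t]], where therefore [e^h <= 1], [w' <= n], [w <= n t < nπ] and
    [h' <= (nπ)^(1/n)], so [h(t) - h(0) < π (nπ)^(1/n)], a contradiction. *)

From Stdlib Require Import Reals Lra Lia Ranalysis5.
Open Scope R_scope.

Lemma nondecreasing_of_derive_nonneg (f f' : R -> R) (a b : R) : a <= b ->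
  (forall c, a <= c <= b -> derivable_pt_lim f c (f' c)) ->
  (forall c, a < c < b -> 0 <= f' c) -> f a <= f b.
Proof.
  intros Hab Hd Hpos.
  destruct (Rle_lt_or_eq_dec _ _ Hab) as [Hlt | <-]; [| lra].
  destruct (MVT_cor2 f f' a b Hlt Hd) as [c [Hmvt Hc]].
  assert (0 <= f' c * (b - a)) by (apply Rmult_le_pos; [apply Hpos | ]; lra).
  lra.
Qed.

Lemma increment_le_of_derive_le (f f' : R -> R) (a b K : R) : a <= b ->
  (forall c, a <= c <= b -> derivable_pt_lim f c (f' c)) ->
  (forall c, a < c < b -> f' c <= K) -> f b - f a <= K * (b - a).
Proof.
  intros Hab Hd Hle.
  destruct (Rle_lt_or_eq_dec _ _ Hab) as [Hlt | <-]; [| lra].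
  destruct (MVT_cor2 f f' a b Hlt Hd) as [c [-> Hc]].
  apply Rmult_le_compat_r; [lra | apply Hle; lra].
Qed.

Lemma derive_even_at_0 (f : R -> R) (r l : R) : 0 < r ->
  (forall u, - r < u < r -> f (- u) = f u) ->
  derivable_pt_lim f 0 l -> l = 0.
Proof.
  intros Hr Hev Hd.
  assert (Hmirr : derivable_pt_lim f 0 (- l)).
  { apply (derivable_pt_lim_locally_ext (mirr_fct f) f 0 (- r) r); [lra | |].
    - intros z Hz; unfold mirr_fct; apply Hev; lra.
    - apply derivable_pt_lim_mirr_fwd; rewrite Ropp_0, Ropp_involutive; exact Hd. }
  pose proof (uniqueness_limite f 0 l (- l) Hd Hmirr); lra.
Qed.

Lemma even_of_analytic_in_u2 (h : R -> R) (r : R) : analytic_in_u2 h r ->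
  forall u, - r < u < r -> h (- u) = h u.
Proof.
  intros [g [_ Hg]] u Hu.
  rewrite !Hg by lra; f_equal; ring.
Qed.

Lemma tends_to_infty_left_above (h : R -> R) (r a M : R) : a < r ->
  tends_to_infty_left h r -> exists u, a < u < r /\ M < h u.
Proof.
  intros Har Hlim.
  destruct (Hlim M) as [d [Hd Hnear]].
  exists (Rmax (r - d / 2) ((a + r) / 2)).
  pose proof (Rmax_l (r - d / 2) ((a + r) / 2)).
  pose proof (Rmax_r (r - d / 2) ((a + r) / 2)).
  assert (Rmax (r - d / 2) ((a + r) / 2) < r) by (apply Rmax_lub_lt; lra).
  split; [lra | apply Hnear; lra].
Qed.

Lemma le_Rpower_inv_of_pow_le (x y : R) (n : nat) : (0 < n)%nat ->
  0 <= x -> x ^ n <= y -> x <= Rpower y (/ INR n).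
Proof.
  intros Hn Hx Hxy.
  assert (HnR : 0 < INR n) by (apply lt_0_INR; lia).
  destruct (Rle_lt_or_eq_dec _ _ Hx) as [Hxpos | <-].
  - replace x with (Rpower (x ^ n) (/ INR n)).
    + apply Rle_Rpower_l; [left; apply Rinv_0_lt_compat; lra |].
      split; [apply pow_lt |]; lra.
    + rewrite <- Rpower_pow, Rpower_mult, Rinv_r, Rpower_1 by lra; reflexivity.
  - left; apply exp_pos.
Qed.

Section GrauertTubeODE.

Variables (n : nat) (r : R) (h h1 h2 : R -> R).
Hypothesis n_pos : (0 < n)%nat.
Hypothesis r_bounds : 0 < r < PI.
Hypothesis h_deriv : forall u, - r < u < r -> derivable_pt_lim h u (h1 u).
Hypothesis h1_deriv : forall u, - r < u < r -> derivable_pt_lim h1 u (h2 u).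
Hypothesis h_ode : forall u, 0 <= u < r ->
  h2 u * (h1 u) ^ (n - 1) = exp (h u) * (sin u) ^ (n - 1).
Hypothesis h_even : forall u, - r < u < r -> h (- u) = h u.
Hypothesis h_blowup : tends_to_infty_left h r.

Let w (u : R) : R := h1 u ^ n.
Let w' (u : R) : R := INR n * (exp (h u) * sin u ^ (n - 1)).

Lemma h1_0 : h1 0 = 0.
Proof. apply (derive_even_at_0 h r); [lra | exact h_even | apply h_deriv; lra]. Qed.

Lemma w_0 : w 0 = 0.
Proof. unfold w; rewrite h1_0; apply pow_ne_zero; lia. Qed.

Lemma w_deriv u : 0 <= u < r -> derivable_pt_lim w u (w' u).
Proof.
  intros Hu; unfold w'.
  replace (INR n * (exp (h u) * sin u ^ (n - 1)))
    with (INR n * h1 u ^ Nat.pred n * h2 u).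
  - apply (derivable_pt_lim_comp h1 (fun y => y ^ n)); [apply h1_deriv; lra |].
    apply derivable_pt_lim_pow.
  - rewrite <- h_ode by lra; replace (Nat.pred n) with (n - 1)%nat by lia; ring.
Qed.

Lemma w'_nonneg u : 0 <= u < r -> 0 <= w' u.
Proof.
  intros Hu; unfold w'.
  apply Rmult_le_pos; [apply pos_INR |].
  apply Rmult_le_pos; [left; apply exp_pos |].
  apply pow_le, sin_ge_0; lra.
Qed.

Lemma w_nondecreasing a b : 0 <= a <= b -> b < r -> w a <= w b.
Proof.
  intros Hab Hb; apply (nondecreasing_of_derive_nonneg w w'); [lra | |].
  - intros c Hc; apply w_deriv; lra.
  - intros c Hc; apply w'_nonneg; lra.
Qed.

(* Once [h1] is negative, [w > 0] keeps it away from 0, so by the IVT it stays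
   negative. *)
Lemma h1_neg_propagates u1 u : 0 <= u1 <= u -> u < r -> h1 u1 < 0 -> h1 u < 0.
Proof.
  intros Hu Hur Hneg.
  assert (Hw1 : 0 < w u1).
  { assert (0 <= w u1) by (rewrite <- w_0; apply w_nondecreasing; lra).
    assert (w u1 <> 0) by (apply pow_nonzero; lra).
    lra. }
  destruct (Rlt_or_le (h1 u) 0) as [| Hge]; [assumption | exfalso].
  assert (Hzero : exists t, u1 <= t <= u /\ h1 t = 0).
  { destruct Hge as [Hgt | Heq]; [| exists u; split; [lra | auto]].
    destruct (IVT_interv h1 u1 u) as [t Ht]; [| | lra | lra | exists t; exact Ht].
    - intros a Ha; apply derivable_continuous_pt; exists (h2 a); apply h1_deriv; lra.
    - destruct (Req_dec u1 u) as [-> |]; lra. }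
  destruct Hzero as [t [Ht Ht0]].
  assert (w u1 <= w t) by (apply w_nondecreasing; lra).
  assert (w t = 0) by (unfold w; rewrite Ht0; apply pow_ne_zero; lia).
  lra.
Qed.

Lemma h1_nonneg u : 0 <= u < r -> 0 <= h1 u.
Proof.
  intros Hu.
  destruct (Rle_or_lt 0 (h1 u)) as [| Hneg]; [assumption | exfalso].
  destruct (tends_to_infty_left_above h r u (h u)) as [v [Hv Hbig]];
    [lra | exact h_blowup |].
  assert (h v - h u <= 0 * (v - u)); [| lra].
  apply (increment_le_of_derive_le h h1); [lra | |].
  - intros c Hc; apply h_deriv; lra.
  - intros c Hc; left; apply (h1_neg_propagates u); lra.
Qed.

Lemma h_nondecreasing a b : 0 <= a <= b -> b < r -> h a <= h b.
Proof.
  intros Hab Hb; apply (nondecreasing_of_derive_nonneg h h1); [lra | |].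
  - intros c Hc; apply h_deriv; lra.
  - intros c Hc; apply h1_nonneg; lra.
Qed.

(* Where [h <= 0] we have [e^h <= 1] and [sin <= 1], so [w' <= n]. *)
Lemma h1_le_where_h_nonpos s : 0 <= s < r -> (forall c, 0 <= c <= s -> h c <= 0) ->
  h1 s <= Rpower (INR n * PI) (/ INR n).
Proof.
  intros Hs Hnonpos.
  apply le_Rpower_inv_of_pow_le; [lia | apply h1_nonneg; lra |].
  assert (Hws : w s - w 0 <= INR n * (s - 0)).
  { apply (increment_le_of_derive_le w w'); [lra | |].
    - intros c Hc; apply w_deriv; lra.
    - intros c Hc; unfold w'.
      rewrite <- (Rmult_1_r (INR n)) at 2.
      apply Rmult_le_compat_l; [apply pos_INR |].
      rewrite <- (Rmult_1_r 1).
      apply Rmult_le_compat; [left; apply exp_pos | apply pow_le, sin_ge_0; lra | |].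
      + rewrite <- exp_0.
        destruct (Rle_lt_or_eq_dec _ _ (Hnonpos c ltac:(lra))) as [Hl | ->];
          [left; apply exp_increasing; exact Hl | lra].
      + rewrite <- (pow1 (n - 1)); apply pow_incr.
        split; [apply sin_ge_0; lra | apply SIN_bound]. }
  rewrite w_0 in Hws; fold (w s).
  assert (INR n * s <= INR n * PI) by (apply Rmult_le_compat_l; [apply pos_INR | lra]).
  lra.
Qed.

Lemma h_0_lower_bound : h 0 >= - PI * Rpower (INR n * PI) (/ INR n).
Proof.
  set (C := Rpower (INR n * PI) (/ INR n)).
  assert (HC : 0 < C) by apply exp_pos.
  destruct (Rge_or_gt (h 0) (- PI * C)) as [| Hlow]; [assumption | exfalso].
  assert (Hh0 : h 0 < 0) by (assert (0 < PI * C) by (apply Rmult_lt_0_compat; lra); lra).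
  destruct (tends_to_infty_left_above h r 0 0) as [v [Hv Hhv]]; [lra | exact h_blowup |].
  destruct (IVT_interv h 0 v) as [t [Ht Hht]]; [| lra | lra | lra |].
  { intros a Ha; apply derivable_continuous_pt; exists (h1 a); apply h_deriv; lra. }
  assert (h t - h 0 <= C * (t - 0)).
  { apply (increment_le_of_derive_le h h1); [lra | |].
    - intros c Hc; apply h_deriv; lra.
    - intros c Hc; apply h1_le_where_h_nonpos; [lra |].
      intros c' Hc'; rewrite <- Hht; apply h_nondecreasing; lra. }
  assert (C * t < C * PI) by (apply Rmult_lt_compat_l; lra).
  lra.
Qed.

End GrauertTubeODE.

Theorem lemma4p1 (n : nat) (hn : (2 <= n)%nat) (r : R) (hr : 0 < r < PI)
  (h : R -> R)
  (Hode : solves_ode n r h)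
  (Hlim : tends_to_infty_left h r)
  (Han : analytic_in_u2 h r) :
  h 0 >= - PI * Rpower (INR n) (/ INR n) * Rpower PI (/ INR n) /\
  (forall u, 0 <= u < r ->
     h u >= - PI * Rpower (INR n) (/ INR n) * Rpower PI (/ INR n)).
Proof.
  destruct Hode as [h1 [h2 [Hd1 [Hd2 Hode]]]].
  assert (Hn : (0 < n)%nat) by lia.
  pose proof (even_of_analytic_in_u2 h r Han) as Hev.
  assert (HnR : 0 < INR n) by (apply lt_0_INR; lia).
  rewrite Rmult_assoc, Rpower_mult_distr by lra.
  pose proof (h_0_lower_bound n r h h1 h2 Hn hr Hd1 Hd2 Hode Hev Hlim) as H0.
  split; [exact H0 |].
  intros u Hu.
  assert (h 0 <= h u)
    by (apply (h_nondecreasing n r h h1 h2 Hn hr Hd1 Hd2 Hode Hev Hlim); lra).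
  lra.
Qed.
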